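(* Let $\mathcal T$ be a triangulation of a surface $S$ of topological type $(g,n)$ and let $\Theta:E\to[0,\pi)$ satisfy $\mathbf{(C1)}$. In Euclidean background geometry, with the change of variables $u_i=\ln r_i$, the Jacobian matrix $(\partial K_i/\partial u_j)$ of the curvature map $u\mapsto(K_1,\dots,K_{|V|})$ on $\mathbb R^{|V|}$ is symmetric and positive semi-definite; moreover, restricted to the hyperplane $\Xi_d=\{u\in\mathbb R^{|V|}:\sum_{i}u_i=d\}$ (for any $d\in\mathbb R$) it is positive definite, i.e. $x^{T}(\partial K_i/\partial u_j)x>0$ for all non-zero $x$ with $\sum_i x_i=0$.
   Context: $S$: compact oriented surface of genus $g$ with $n\ge0$ boundary circles. $\mathcal T$: vertices $V=\{v_1,\dots,v_{|V|}\}$, edges $E$, boundary vertices $V_\partial$. $\mathbf{(C1)}$: whenever $e_1,e_2,e_3$ bound a triangle, $I(e_1)+I(e_2)I(e_3)\ge0$ and cyclic analogues, $I=\cos\Theta$. For $r\in\mathbb R_+^{|V|}$, each triangle $v_iv_jv_k$ is realized as the Euclidean triangle with sides $l_{ij}=\sqrt{r_i^2+r_j^2+2r_ir_j\cos\Theta([v_i,v_j])}$ etc., glued into a Euclidean cone metric; $\sigma(v_i)$ is the total angle at $v_i$; $K_i=2\pi-\sigma(v_i)$ for interior and $\pi-\sigma(v_i)$ for boundary vertices. *)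

From HB Require Import structures.
From mathcomp Require Import all_boot all_order all_algebra.
From mathcomp Require Import all_classical all_reals all_analysis.
Set Implicit Arguments. Unset Strict Implicit. Unset Printing Implicit Defensive.
Import Order.TTheory GRing.Theory Num.Theory.
Local Open Scope ring_scope.

Section Triangulation.
Variable nV : nat.
(* A triangulation is given by its set of triangles, each a 3-element set of
   vertices 'I_nV (simplicial triangulation). *)
Variable T : {set {set 'I_nV}}.

Definition is_edge (e : {set 'I_nV}) : bool :=
  (#|e| == 2)%N && [exists t in T, e \subset t].

Definition edge_deg (e : {set 'I_nV}) : nat := #|[set t in T | e \subset t]|.

Definition is_bd_edge (e : {set 'I_nV}) : bool := is_edge e && (edge_deg e == 1)%N.

Definition is_bd_vertex (v : 'I_nV) : bool :=
  [exists e : {set 'I_nV}, is_bd_edge e && (v \in e)].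

Definition adj : rel 'I_nV := fun a b => (a != b) && is_edge [set a; b].

Definition link_adj (v : 'I_nV) : rel 'I_nV :=
  fun a b => [&& a != v, b != v, a != b & [set v; a; b] \in T].

(* Combinatorial triangulation of a compact connected (oriented) surface,
   possibly with boundary:
   - every triangle has exactly 3 vertices, there is at least one triangle;
   - every vertex belongs to some triangle;
   - every edge lies in one or two triangles (boundary / interior edges);
   - the link of every vertex is connected (hence a path or a cycle);
   - the 1-skeleton is connected. *)
Definition is_surface_triangulation : Prop :=
  [/\ (#|T| > 0)%N /\ (forall t, t \in T -> #|t| = 3%N),
      forall v : 'I_nV, exists2 t, t \in T & v \in t,
      forall e, is_edge e -> (edge_deg e <= 2)%N,
      forall v a b : 'I_nV, adj v a -> adj v b -> connect (link_adj v) a b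
    & forall a b : 'I_nV, connect adj a b].
End Triangulation.

Section Geometry.
Variable R : realType.
Variable nV : nat.
Variable T : {set {set 'I_nV}}.
Variable Theta : {set 'I_nV} -> R.

Definition Iw (i j : 'I_nV) : R := cos (Theta [set i; j]).

Definition C1 : Prop :=
  forall i j k : 'I_nV, [set i; j; k] \in T -> i != j -> j != k -> i != k ->
    Iw i j + Iw j k * Iw i k >= 0.

Definition elen (r : 'I_nV -> R) (i j : 'I_nV) : R :=
  Num.sqrt (r i ^+ 2 + r j ^+ 2 + 2 * r i * r j * Iw i j).

(* inner angle at vertex i of the Euclidean triangle ijk (law of cosines) *)
Definition eangle (r : 'I_nV -> R) (i j k : 'I_nV) : R :=
  acos ((elen r i j ^+ 2 + elen r i k ^+ 2 - elen r j k ^+ 2)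
        / (2 * elen r i j * elen r i k)).

Definition tri_angle (r : 'I_nV -> R) (t : {set 'I_nV}) (v : 'I_nV) : R :=
  let s := enum (t :\ v) in eangle r v (nth v s 0) (nth v s 1).

Definition cone_angle (r : 'I_nV -> R) (v : 'I_nV) : R :=
  \sum_(t in T | v \in t) tri_angle r t v.

Definition Kcurv (u : 'I_nV -> R) (i : 'I_nV) : R :=
  (if is_bd_vertex T i then pi else 2 * pi) - cone_angle (fun k => expR (u k)) i.

Definition Kslice (u : 'I_nV -> R) (i j : 'I_nV) : R -> R :=
  fun s => Kcurv (fun k => if k == j then s else u k) i.

Definition jacK (u : 'I_nV -> R) (i j : 'I_nV) : R := derive1 (Kslice u i j) (u j).

Definition quadK (u x : 'I_nV -> R) : R :=
  \sum_(i < nV) \sum_(j < nV) x i * jacK u i j * x j.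
End Geometry.

From HB Require Import structures.
From mathcomp Require Import all_boot all_order all_algebra.
From mathcomp Require Import all_classical all_reals all_analysis.
From mathcomp Require Import lra ring.
Import Order.TTheory GRing.Theory Num.Theory.
Set Implicit Arguments. Unset Strict Implicit.
Local Open Scope ring_scope.

(* With r_i = e^(u_i), the inner angle theta_i of a Euclidean triangle ijk
   satisfies d theta_i = w_ij (du_j - du_i) + w_ik (du_k - du_i), where under
   (C1) the weights are nonnegative, symmetric (w_ij = w_ji), and the two
   weights at a vertex never vanish together. As K_i is a constant minus the
   sum of the angles at i, the Jacobian quadratic form is the sum over the
   triangles of the w_ij (x_i - x_j)^2 over their edges: it is nonnegative and
   vanishes only if x is constant on every triangle, hence constant on the
   connected 1-skeleton, hence zero when sum_i x_i = 0. *)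

Section Calculus.
Variable R : realType.
Implicit Types (f g : R -> R) (x df dg : R).

Lemma is_derive_mul f g x df dg : is_derive x 1 f df -> is_derive x 1 g dg ->
  is_derive x 1 (fun s => f s * g s) (df * g x + f x * dg).
Proof.
move=> f_df g_dg; apply: is_derive_eq (is_deriveM f_df g_dg) _.
by rewrite /GRing.scale /= addrC mulrC.
Qed.

Lemma is_derive_inv f x df : is_derive x 1 f df -> f x != 0 ->
  is_derive x 1 (fun s => (f s)^-1) (- df / f x ^+ 2).
Proof.
move=> f_df fx_neq0; apply: is_derive_eq (is_deriveV fx_neq0 f_df) _.
by rewrite /GRing.scale /= mulNr mulrC mulNr.
Qed.

Lemma is_derive_sqrt f x df : is_derive x 1 f df -> 0 < f x ->
  is_derive x 1 (fun s => Num.sqrt (f s)) (df / (2 * Num.sqrt (f x))).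
Proof.
move=> f_df fx_gt0.
by have := is_derive1_comp (is_derive1_sqrt fx_gt0) f_df; rewrite mulrC.
Qed.

Lemma is_derive_acos f x df : is_derive x 1 f df -> -1 < f x < 1 ->
  is_derive x 1 (fun s => acos (f s)) (- df / Num.sqrt (1 - f x ^+ 2)).
Proof.
move=> f_df fx_range.
have := is_derive1_comp (is_derive1_acos fx_range) f_df.
by rewrite mulrC mulrN mulNr.
Qed.

Lemma is_derive_big (I : Type) (r : seq I) (P : pred I) (F : I -> R -> R)
    (dF : I -> R) x :
  (forall i, P i -> is_derive x 1 (F i) (dF i)) ->
  is_derive x 1 (fun s => \sum_(i <- r | P i) F i s) (\sum_(i <- r | P i) dF i).
Proof.
move=> F_dF; rewrite -fct_sumE.
elim/big_rec2: _ => [|i dS S Pi S_dS]; first exact: is_derive_cst.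
exact: is_deriveD (F_dF i Pi) S_dS.
Qed.

(* [S] and [Q] are the squared lengths of the sides adjacent to the angle and
   [P] that of the opposite side. *)
Lemma is_derive_acos_cosine_law (S Q P : R -> R) x dS dQ dP :
  is_derive x 1 S dS -> is_derive x 1 Q dQ -> is_derive x 1 P dP ->
  0 < S x -> 0 < Q x ->
  0 < S x * Q x - ((S x + Q x - P x) / 2) ^+ 2 ->
  is_derive x 1
    (fun s => acos ((S s + Q s - P s) / (2 * Num.sqrt (S s) * Num.sqrt (Q s))))
    (- (2 * S x * Q x * ((dS + dQ - dP) / 2)
        - ((S x + Q x - P x) / 2) * (dS * Q x + S x * dQ))
     / (2 * S x * Q x * Num.sqrt (S x * Q x - ((S x + Q x - P x) / 2) ^+ 2))).
Proof.
move=> S_dS Q_dQ P_dP Sx_gt0 Qx_gt0.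
set D := S x * Q x - _ => D_gt0.
have sS_gt0 : 0 < Num.sqrt (S x) by rewrite sqrtr_gt0.
have sQ_gt0 : 0 < Num.sqrt (Q x) by rewrite sqrtr_gt0.
have sD_gt0 : 0 < Num.sqrt D by rewrite sqrtr_gt0.
have sS2 : Num.sqrt (S x) ^+ 2 = S x by rewrite sqr_sqrtr // ltW.
have sQ2 : Num.sqrt (Q x) ^+ 2 = Q x by rewrite sqr_sqrtr // ltW.
have sD2 : Num.sqrt D ^+ 2 = D by rewrite sqr_sqrtr // ltW.
have den_neq0 : 2 * Num.sqrt (S x) * Num.sqrt (Q x) != 0.
  by rewrite gt_eqF // !mulr_gt0.
have den_d := is_derive_mul (is_derive_mul (is_derive_cst (2 : R) x 1)
  (is_derive_sqrt S_dS Sx_gt0)) (is_derive_sqrt Q_dQ Qx_gt0).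
have cos_d := is_derive_mul (is_deriveB (is_deriveD S_dS Q_dQ) P_dP)
  (is_derive_inv den_d den_neq0).
pose c := (S x + Q x - P x) / (2 * Num.sqrt (S x) * Num.sqrt (Q x)).
have sin2 : 1 - c ^+ 2 = (Num.sqrt D / (Num.sqrt (S x) * Num.sqrt (Q x))) ^+ 2.
  rewrite /c !expr_div_n !exprMn sS2 sQ2 sD2 /D; field.
  by rewrite !gt_eqF.
have c_range : -1 < c < 1.
  have : 0 < 1 - c ^+ 2 by rewrite sin2 exprn_gt0 // divr_gt0 // mulr_gt0.
  by move=> ?; apply/andP; split; nra.
apply: is_derive_eq (is_derive_acos cos_d c_range) _.
rewrite sin2 sqrtr_sqr ger0_norm; last by rewrite ltW // divr_gt0 // mulr_gt0.
have -> : (S + Q - P) x = S x + Q x - P x by [].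
rewrite /c /cst.
move: (Num.sqrt D) sD_gt0 => sD sD_gt0.
move: (Num.sqrt (S x)) sS_gt0 sS2 => sS sS_gt0 <-.
move: (Num.sqrt (Q x)) sQ_gt0 sQ2 => sQ sQ_gt0 <-.
field.
by rewrite !gt_eqF.
Qed.

End Calculus.

Section EuclideanTriangle.
Variable R : realType.
Implicit Types (x y z a b c : R).

Definition edge_sq x y c := x ^+ 2 + y ^+ 2 + 2 * x * y * c.

(* The square of twice the area of the triangle with radii [x y z] whose edges
   [xy], [xz], [yz] carry the intersection-angle cosines [a], [b], [c]. *)
Definition area_sq x y z a b c :=
  x ^+ 2 * y ^+ 2 * (1 - a ^+ 2) + x ^+ 2 * z ^+ 2 * (1 - b ^+ 2)
  + y ^+ 2 * z ^+ 2 * (1 - c ^+ 2)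
  + 2 * x * y * z * (z * (a + b * c) + y * (b + a * c) + x * (c + a * b)).

Definition c1_triple a b c : bool :=
  [&& [&& -1 < a <= 1, -1 < b <= 1 & -1 < c <= 1],
      0 <= a + b * c, 0 <= b + a * c & 0 <= c + a * b].

Definition angle_weight_num x y z a b c :=
  x * y * (1 - a ^+ 2) + x * z * (c + a * b) + y * z * (b + a * c).

(* The derivative of the angle at the vertex of radius [x = e^(u_x)] with
   respect to [u_y]. *)
Definition angle_weight x y z a b c :=
  x * y * angle_weight_num x y z a b c
  / (Num.sqrt (area_sq x y z a b c) * edge_sq x y a).

Lemma edge_sqC x y c : edge_sq y x c = edge_sq x y c.
Proof. by rewrite /edge_sq; ring. Qed.

Lemma edge_sq_gt0 x y c : 0 < x -> 0 < y -> -1 < c -> 0 < edge_sq x y c.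
Proof.
move=> x_gt0 y_gt0 c_gtN1.
have -> : edge_sq x y c = (x - y) ^+ 2 + 2 * x * y * (1 + c).
  by rewrite /edge_sq; ring.
by rewrite ltr_wpDl ?sqr_ge0 // !mulr_gt0 //; lra.
Qed.

Lemma area_sqC12 x y z a b c : area_sq y x z a c b = area_sq x y z a b c.
Proof. by rewrite /area_sq; ring. Qed.

Lemma area_sqC23 x y z a b c : area_sq x z y b a c = area_sq x y z a b c.
Proof. by rewrite /area_sq; ring. Qed.

Lemma area_sqE x y z a b c :
  edge_sq x y a * edge_sq x z b
  - ((edge_sq x y a + edge_sq x z b - edge_sq y z c) / 2) ^+ 2
  = area_sq x y z a b c.
Proof. by rewrite /edge_sq /area_sq; field. Qed.

Lemma c1_tripleC12 a b c : c1_triple a b c -> c1_triple b a c.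
Proof.
case/and4P=> /and3P[a_range b_range c_range] abc bac cab.
by rewrite /c1_triple [b * a]mulrC b_range a_range c_range bac abc cab.
Qed.

Lemma area_sq_gt0 x y z a b c : 0 < x -> 0 < y -> 0 < z ->
  c1_triple a b c -> 0 < area_sq x y z a b c.
Proof.
move=> x_gt0 y_gt0 z_gt0.
case/and4P=> /and3P[/andP[a_gtN1 a_le1] b_range c_range] abc bac cab.
have sq_ge0 (p q e : R) : -1 < e <= 1 -> 0 <= p ^+ 2 * q ^+ 2 * (1 - e ^+ 2).
  by case/andP=> ? ?; apply: mulr_ge0; [rewrite mulr_ge0 ?sqr_ge0 | nra].
have := sq_ge0 x z b b_range; have := sq_ge0 y z c c_range.
have xyz_gt0 : 0 < 2 * x * y * z by rewrite !mulr_gt0.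
rewrite /area_sq; have [a_lt1|a_ge1] := ltP a 1.
- have : 0 < x ^+ 2 * y ^+ 2 * (1 - a ^+ 2).
    by rewrite mulr_gt0 ?mulr_gt0 ?exprn_gt0 //; nra.
  have : 0 <= 2 * x * y * z
              * (z * (a + b * c) + y * (b + a * c) + x * (c + a * b)).
    by rewrite mulr_ge0 ?addr_ge0 ?mulr_ge0 // ltW.
  lra.
- (* The first term vanishes, but then [a + b c = 1 + b c > 0]. *)
  have a1 : a = 1 by apply/eqP; rewrite eq_le a_le1 a_ge1.
  subst a; move: b_range c_range => /andP[? ?] /andP[? ?].
  have : 0 < z * (1 + b * c) by rewrite mulr_gt0 //; nra.
  have : 0 <= y * (b + 1 * c) by rewrite mulr_ge0 // ltW.
  have : 0 <= x * (c + 1 * b) by rewrite mulr_ge0 // ltW.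
  move=> ? ? ?; have : 0 < 2 * x * y * z
      * (z * (1 + b * c) + y * (b + 1 * c) + x * (c + 1 * b)).
    by rewrite mulr_gt0 //; lra.
  lra.
Qed.

Lemma angle_weightC x y z a b c :
  angle_weight y x z a c b = angle_weight x y z a b c.
Proof.
rewrite /angle_weight area_sqC12 edge_sqC; congr (_ / _).
by rewrite /angle_weight_num; ring.
Qed.

Lemma angle_weight_num_ge0 x y z a b c : 0 < x -> 0 < y -> 0 < z ->
  c1_triple a b c -> 0 <= angle_weight_num x y z a b c.
Proof.
move=> x_gt0 y_gt0 z_gt0 /and4P[/and3P[/andP[a_gtN1 a_le1] _ _] _ bac cab].
by rewrite /angle_weight_num !addr_ge0 ?mulr_ge0 //; nra.
Qed.

Lemma angle_weight_num_pair_gt0 x y z a b c : 0 < x -> 0 < y -> 0 < z ->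
  c1_triple a b c ->
  0 < angle_weight_num x y z a b c + angle_weight_num x z y b a c.
Proof.
move=> x_gt0 y_gt0 z_gt0 abc.
have num1_ge0 := angle_weight_num_ge0 x_gt0 y_gt0 z_gt0 abc.
have num2_ge0 := angle_weight_num_ge0 x_gt0 z_gt0 y_gt0 (c1_tripleC12 abc).
move: abc num1_ge0 num2_ge0 => /and4P[/and3P[/andP[a_gtN1 a_le1]]].
move=> /andP[b_gtN1 b_le1] /andP[c_gtN1 c_le1] _ bac cab.
rewrite /angle_weight_num => num1_ge0 num2_ge0.
have xy_gt0 := mulr_gt0 x_gt0 y_gt0; have xz_gt0 := mulr_gt0 x_gt0 z_gt0.
have zy_gt0 := mulr_gt0 z_gt0 y_gt0.
have [a_lt1|a_ge1] := ltP a 1.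
- have : 0 < x * y * (1 - a ^+ 2) by apply: mulr_gt0 => //; nra.
  have : 0 <= x * z * (c + a * b) by apply: mulr_ge0 => //; apply: ltW.
  have : 0 <= y * z * (b + a * c) by apply: mulr_ge0 => //; rewrite mulrC ltW.
  lra.
- have a1 : a = 1 by apply/eqP; rewrite eq_le a_le1 a_ge1.
  subst a.
  have : 0 < z * y * (1 + b * c) by apply: mulr_gt0 => //; nra.
  have : 0 <= x * z * (1 - b ^+ 2) by apply: mulr_ge0; [apply: ltW | nra].
  have : 0 <= x * y * (c + b * 1) by apply: mulr_ge0; [apply: ltW | lra].
  lra.
Qed.

Lemma angle_weight_ge0 x y z a b c : 0 < x -> 0 < y -> 0 < z ->
  c1_triple a b c -> 0 <= angle_weight x y z a b c.
Proof.
move=> x_gt0 y_gt0 z_gt0 abc.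
have /and4P[/and3P[/andP[a_gtN1 _] _ _] _ _ _] := abc.
by rewrite /angle_weight divr_ge0 ?mulr_ge0 ?angle_weight_num_ge0 ?ltW
  ?sqrtr_gt0 ?area_sq_gt0 ?edge_sq_gt0.
Qed.

Lemma angle_weight_gt0 x y z a b c : 0 < x -> 0 < y -> 0 < z ->
  c1_triple a b c -> 0 < angle_weight_num x y z a b c ->
  0 < angle_weight x y z a b c.
Proof.
move=> x_gt0 y_gt0 z_gt0 abc num_gt0.
have /and4P[/and3P[/andP[a_gtN1 _] _ _] _ _ _] := abc.
by rewrite /angle_weight divr_gt0 ?mulr_gt0 ?sqrtr_gt0 ?area_sq_gt0
  ?edge_sq_gt0.
Qed.

Lemma angle_weight_pair_gt0 x y z a b c : 0 < x -> 0 < y -> 0 < z ->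
  c1_triple a b c -> 0 < angle_weight x y z a b c + angle_weight x z y b a c.
Proof.
move=> x_gt0 y_gt0 z_gt0 abc; have acb := c1_tripleC12 abc.
have w1_ge0 := angle_weight_ge0 x_gt0 y_gt0 z_gt0 abc.
have w2_ge0 := angle_weight_ge0 x_gt0 z_gt0 y_gt0 acb.
have := angle_weight_num_pair_gt0 x_gt0 y_gt0 z_gt0 abc.
have [num1_gt0 _|num1_le0 sum_gt0] := ltP 0 (angle_weight_num x y z a b c).
  by have := angle_weight_gt0 x_gt0 y_gt0 z_gt0 abc num1_gt0; lra.
have num2_gt0 : 0 < angle_weight_num x z y b a c by lra.
by have := angle_weight_gt0 x_gt0 z_gt0 y_gt0 acb num2_gt0; lra.
Qed.

Lemma is_derive_edge_sq (f g : R -> R) c (s0 df dg : R) :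
  is_derive s0 1 f df -> is_derive s0 1 g dg ->
  is_derive s0 1 (fun s => edge_sq (f s) (g s) c)
    (2 * f s0 * df + 2 * g s0 * dg + 2 * c * (df * g s0 + f s0 * dg)).
Proof.
move=> f_df g_dg.
have -> : (fun s => edge_sq (f s) (g s) c) =
    (fun s => f s * f s + g s * g s + 2 * c * (f s * g s)).
  by apply: funext => s; rewrite /edge_sq; ring.
apply: is_derive_eq (is_deriveD
  (is_deriveD (is_derive_mul f_df f_df) (is_derive_mul g_dg g_dg))
  (is_derive_mul (is_derive_cst (2 * c) s0 1) (is_derive_mul f_df g_dg))) _.
by rewrite /cst; ring.
Qed.

Lemma is_derive_angle (f g h : R -> R) (s0 ex ey ez : R) a b c :
  (forall s, 0 < f s) -> (forall s, 0 < g s) -> (forall s, 0 < h s) ->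
  is_derive s0 1 f (ex * f s0) -> is_derive s0 1 g (ey * g s0) ->
  is_derive s0 1 h (ez * h s0) -> c1_triple a b c ->
  is_derive s0 1 (fun s => acos ((Num.sqrt (edge_sq (f s) (g s) a) ^+ 2
       + Num.sqrt (edge_sq (f s) (h s) b) ^+ 2
       - Num.sqrt (edge_sq (g s) (h s) c) ^+ 2)
       / (2 * Num.sqrt (edge_sq (f s) (g s) a)
            * Num.sqrt (edge_sq (f s) (h s) b))))
    (angle_weight (f s0) (g s0) (h s0) a b c * (ey - ex)
     + angle_weight (f s0) (h s0) (g s0) b a c * (ez - ex)).
Proof.
move=> f_gt0 g_gt0 h_gt0 f_d g_d h_d abc.
have /and4P[/and3P[/andP[a_gtN1 _] /andP[b_gtN1 _] /andP[c_gtN1 _]] _ _ _]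
  := abc.
have fg_gt0 s := edge_sq_gt0 (f_gt0 s) (g_gt0 s) a_gtN1.
have fh_gt0 s := edge_sq_gt0 (f_gt0 s) (h_gt0 s) b_gtN1.
have gh_gt0 s := edge_sq_gt0 (g_gt0 s) (h_gt0 s) c_gtN1.
have D_gt0 := area_sq_gt0 (f_gt0 s0) (g_gt0 s0) (h_gt0 s0) abc.
under eq_fun => s do rewrite !sqr_sqrtr ?ltW ?fg_gt0 ?fh_gt0 ?gh_gt0 //.
have := is_derive_acos_cosine_law (is_derive_edge_sq a f_d g_d)
  (is_derive_edge_sq b f_d h_d) (is_derive_edge_sq c g_d h_d)
  (fg_gt0 s0) (fh_gt0 s0).
rewrite area_sqE => /(_ D_gt0) /is_derive_eq; apply.
move: (fg_gt0 s0) (fh_gt0 s0).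
rewrite /angle_weight (area_sqC23 (f s0) (g s0) (h s0)).
rewrite /angle_weight_num /edge_sq.
by move=> ? ?; field; rewrite !gt_eqF ?sqrtr_gt0.
Qed.

Lemma weighted_sq_sum3_eq0 (w1 w2 w3 p q r : R) :
  0 <= w1 -> 0 <= w2 -> 0 <= w3 ->
  0 < w1 + w2 -> 0 < w1 + w3 -> 0 < w2 + w3 ->
  w1 * (p - q) ^+ 2 + w2 * (p - r) ^+ 2 + w3 * (q - r) ^+ 2 = 0 ->
  p = q /\ p = r.
Proof.
move=> w1_ge0 w2_ge0 w3_ge0 w12_gt0 w13_gt0 w23_gt0 sum_eq0.
have t1 : 0 <= w1 * (p - q) ^+ 2 by rewrite mulr_ge0 ?sqr_ge0.
have t2 : 0 <= w2 * (p - r) ^+ 2 by rewrite mulr_ge0 ?sqr_ge0.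
have t3 : 0 <= w3 * (q - r) ^+ 2 by rewrite mulr_ge0 ?sqr_ge0.
have /eqP : w1 * (p - q) ^+ 2 = 0 by lra.
have /eqP : w2 * (p - r) ^+ 2 = 0 by lra.
have /eqP : w3 * (q - r) ^+ 2 = 0 by lra.
rewrite !mulf_eq0 !orbb !subr_eq0.
by case/orP=> /eqP ?; case/orP=> /eqP ?; case/orP=> /eqP ?; split; lra.
Qed.

Lemma cos_gtN1 (th : R) : 0 <= th < pi -> -1 < cos th.
Proof.
case/andP=> th_ge0 th_ltpi; rewrite lt_neqAle cos_geN1 andbT.
apply/eqP => cosN1; suff th_pi : th = pi by rewrite th_pi ltxx in th_ltpi.
by rewrite -[th]cosK ?in_itv /= ?th_ge0 ?ltW // -cosN1 acosN1.
Qed.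

End EuclideanTriangle.

Section FiniteSets.
Variable X : finType.
Implicit Types (a b c : X).

Lemma set3C12 a b c : [set a; b; c] = [set b; a; c].
Proof. by apply/setP => k; rewrite !inE; case: (k == a); case: (k == b). Qed.

Lemma set3C23 a b c : [set a; b; c] = [set a; c; b].
Proof.
by apply/setP => k; rewrite !inE; case: (k == b); case: (k == c); rewrite ?orbT.
Qed.

Lemma enum_set2 a b : a != b ->
  enum [set a; b] = [:: a; b] \/ enum [set a; b] = [:: b; a].
Proof.
move=> ab; have := enum_uniq [set a; b].
have : size (enum [set a; b]) = 2%N by rewrite -cardE cards2 ab.
have mem_ab k : (k \in enum [set a; b]) = (k == a) || (k == b).
  by rewrite mem_enum !inE.
move: mem_ab; case: (enum _) => [|c [|d []]] //= mem_ab _.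
rewrite inE andbT => cd.
have /orP[/eqP ca|/eqP cb] : (c == a) || (c == b) by rewrite -mem_ab inE eqxx.
all: have /orP[/eqP da|/eqP db] : (d == a) || (d == b)
  by rewrite -mem_ab !inE eqxx orbT.
all: subst; try by rewrite eqxx in cd.
- by left.
- by right.
Qed.

Lemma connect_fun_eq (U : Type) (e : rel X) (f : X -> U) :
  (forall a b, e a b -> f a = f b) -> forall a b, connect e a b -> f a = f b.
Proof.
move=> f_e a b /connectP[p]; elim: p a => [a _ ->//|c p IHp a] /= /andP[ac cp].
by move=> /(IHp c cp) <-; apply: f_e.
Qed.

End FiniteSets.

Section CurvatureJacobian.
Variables (R : realType) (nV : nat) (T : {set {set 'I_nV}}).
Variable Theta : {set 'I_nV} -> R.
Hypothesis Theta_range : forall e, is_edge T e -> 0 <= Theta e < pi.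
Hypothesis C1T : C1 T Theta.
Hypothesis surfT : is_surface_triangulation T.

Local Notation Iv := (Iw Theta).
Implicit Types (u x : 'I_nV -> R) (t : {set 'I_nV}) (i j k p q : 'I_nV).

Definition is_tri t i p q :=
  [&& t \in T, i != p, i != q, p != q & t == [set i; p; q]].

Lemma is_triC12 t i p q : is_tri t i p q -> is_tri t p i q.
Proof.
case/and5P=> tT ip iq pq /eqP t_ipq.
by rewrite /is_tri tT eq_sym ip pq iq t_ipq set3C12 eqxx.
Qed.

Lemma is_triC23 t i p q : is_tri t i p q -> is_tri t i q p.
Proof.
case/and5P=> tT ip iq pq /eqP t_ipq.
by rewrite /is_tri tT iq ip eq_sym pq t_ipq set3C23 eqxx.
Qed.

Lemma card_tri t : t \in T -> #|t| = 3%N.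
Proof. by case: surfT => -[_ card3] _ _ _ _; apply: card3. Qed.

Lemma is_triP t i : t \in T -> i \in t -> exists p q, is_tri t i p q.
Proof.
move=> tT it; have /cards2P[p [q [pq t_i]]] : #|t :\ i| == 2%N.
  by move: (card_tri tT); rewrite (cardsD1 i) it add1n => -[->].
have : (p \in t :\ i) && (q \in t :\ i) by rewrite t_i !inE !eqxx orbT.
rewrite !inE => /andP[/andP[pi _] /andP[qi _]].
exists p, q; rewrite /is_tri tT pq eq_sym pi eq_sym qi.
by rewrite -finset.setUA -t_i finset.setD1K ?eqxx.
Qed.

Lemma is_tri2P t i j : t \in T -> i \in t -> j \in t -> i != j ->
  exists k, is_tri t i j k.
Proof.
move=> tT it jt ij; have [p [q tri_ipq]] := is_triP tT it.
have /and5P[_ _ _ _ /eqP t_ipq] := tri_ipq.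
move: jt ij; rewrite {1}t_ipq !inE => /orP[/orP[]|] /eqP->.
- by rewrite eqxx.
- by exists q.
- by exists p; apply: is_triC23.
Qed.

Lemma is_tri_exists t : t \in T -> exists a b c, is_tri t a b c.
Proof.
move=> tT; have /finset.set0Pn[a a_t] : t != finset.set0.
  by rewrite -card_gt0 card_tri.
by have [b [c tri_abc]] := is_triP tT a_t; exists a, b, c.
Qed.

Lemma sum_tri (F : 'I_nV -> R) t a b c : is_tri t a b c ->
  \sum_(k in t) F k = F a + F b + F c.
Proof.
case/and5P=> _ ab ac bc /eqP->.
rewrite -finset.setUA big_setU1; last by rewrite !inE negb_or ab ac.
by rewrite big_setU1 ?big_set1 ?inE //= addrA.
Qed.

Lemma Iw_sym i j : Iv i j = Iv j i.
Proof. by rewrite /Iw finset.setUC. Qed.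

Lemma c1_triple_tri t i p q : is_tri t i p q ->
  c1_triple (Iv i p) (Iv i q) (Iv p q).
Proof.
have Iw_range t' a b c : is_tri t' a b c -> -1 < Iv a b <= 1.
  case/and5P=> tT ab _ _ /eqP t_abc; rewrite /Iw cos_le1 andbT cos_gtN1 //.
  apply: Theta_range; rewrite /is_edge cards2 ab; apply/existsP; exists t'.
  rewrite tT t_abc; apply/fintype.subsetP => k.
  by rewrite !inE => /orP[] ->; rewrite ?orbT.
have C1_tri t' a b c : is_tri t' a b c -> 0 <= Iv a b + Iv a c * Iv b c.
  case/and5P=> tT ab ac bc /eqP t_abc; rewrite mulrC.
  by apply: C1T => //; rewrite -t_abc.
move=> tri_ipq; have tri_iqp := is_triC23 tri_ipq.
have tri_pqi := is_triC23 (is_triC12 tri_ipq).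
rewrite /c1_triple (Iw_range _ _ _ _ tri_ipq) (Iw_range _ _ _ _ tri_iqp).
rewrite (Iw_range _ _ _ _ tri_pqi) (C1_tri _ _ _ _ tri_ipq).
have := C1_tri _ _ _ _ tri_iqp; have := C1_tri _ _ _ _ tri_pqi.
by rewrite !(Iw_sym q p) !(Iw_sym p i) !(Iw_sym q i) mulrC => -> ->.
Qed.

Lemma elenC r i j : elen Theta r i j = elen Theta r j i.
Proof. by rewrite /elen Iw_sym; congr Num.sqrt; ring. Qed.

Lemma eangleC r i p q : eangle Theta r i p q = eangle Theta r i q p.
Proof.
by rewrite /eangle (elenC r q p) (addrC (elen Theta r i q ^+ 2)) mulrAC.
Qed.

Lemma tri_angleE r t i p q : is_tri t i p q ->
  tri_angle Theta r t i = eangle Theta r i p q.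
Proof.
case/and5P=> _ ip iq pq /eqP->; rewrite /tri_angle.
have -> : [set i; p; q] :\ i = [set p; q].
  apply/setP => k; rewrite !inE; case: (eqVneq k i) => [->|//].
  by rewrite (negbTE ip) (negbTE iq).
by case: (enum_set2 pq) => -> //; rewrite eangleC.
Qed.

Lemma is_derive_slice_radius u j k :
  is_derive (u j) 1 (fun s => expR (if k == j then s else u k))
    ((k == j)%:R * expR (u k)).
Proof.
case: eqP => [->|_]; first by rewrite mul1r; exact: is_derive_expR.
by rewrite mul0r; exact: is_derive_cst.
Qed.

Definition weight u i p q :=
  angle_weight (expR (u i)) (expR (u p)) (expR (u q))
    (Iv i p) (Iv i q) (Iv p q).

Lemma weightC u i p q : weight u p i q = weight u i p q.
Proof. by rewrite /weight angle_weightC (Iw_sym p i). Qed.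

Lemma weight_ge0 u t i p q : is_tri t i p q -> 0 <= weight u i p q.
Proof. by move/c1_triple_tri; apply: angle_weight_ge0; apply: expR_gt0. Qed.

Lemma weight_pair_gt0 u t i p q : is_tri t i p q ->
  0 < weight u i p q + weight u i q p.
Proof.
move/c1_triple_tri => c1_ipq; rewrite /weight (Iw_sym q p).
by apply: angle_weight_pair_gt0 => //; apply: expR_gt0.
Qed.

Lemma is_derive_tri_angle u t i p q j : is_tri t i p q ->
  is_derive (u j) 1
    (fun s => tri_angle Theta (fun k => expR (if k == j then s else u k)) t i)
    (weight u i p q * ((p == j)%:R - (i == j)%:R)
     + weight u i q p * ((q == j)%:R - (i == j)%:R)).
Proof.
move=> tri_ipq; rewrite /weight (Iw_sym q p).
under eq_fun => s do rewrite (tri_angleE _ tri_ipq).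
have at_uj k : (if k == j then u j else u k) = u k by case: eqP => [->|].
have radius_d k : is_derive (u j) 1 (fun s => expR (if k == j then s else u k))
    ((k == j)%:R * expR (if k == j then u j else u k)).
  by rewrite at_uj; exact: is_derive_slice_radius.
have := is_derive_angle (fun s => expR_gt0 _) (fun s => expR_gt0 _)
  (fun s => expR_gt0 _) (radius_d i) (radius_d p) (radius_d q)
  (c1_triple_tri tri_ipq).
by rewrite !at_uj.
Qed.

Definition dangle u t i j :=
  derive1
    (fun s => tri_angle Theta (fun k => expR (if k == j then s else u k)) t i)
    (u j).

Lemma dangleE u t i p q j : is_tri t i p q ->
  dangle u t i j = weight u i p q * ((p == j)%:R - (i == j)%:R)
                   + weight u i q p * ((q == j)%:R - (i == j)%:R).
Proof.
move=> tri_ipq; rewrite /dangle derive1E.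
exact: (@derive_val _ _ _ _ _ _ _ (is_derive_tri_angle u j tri_ipq)).
Qed.

Lemma is_derive_dangle u t i j : t \in T -> i \in t ->
  is_derive (u j) 1
    (fun s => tri_angle Theta (fun k => expR (if k == j then s else u k)) t i)
    (dangle u t i j).
Proof.
move=> tT it; have [p [q tri_ipq]] := is_triP tT it.
by rewrite (dangleE u j tri_ipq); apply: is_derive_tri_angle.
Qed.

Lemma is_derive_Kslice u i j : is_derive (u j) 1 (Kslice T Theta u i j)
  (- \sum_(t in T | i \in t) dangle u t i j).
Proof.
have angles_d t : (t \in T) && (i \in t) -> is_derive (u j) 1
    (fun s => tri_angle Theta (fun k => expR (if k == j then s else u k)) t i)
    (dangle u t i j).
  by case/andP; apply: is_derive_dangle.
have := is_deriveB
  (is_derive_cst (if is_bd_vertex T i then pi else 2 * pi) (u j) 1)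
  (is_derive_big (index_enum _) angles_d).
by rewrite sub0r.
Qed.

Lemma jacKE u i j :
  jacK T Theta u i j = - \sum_(t in T | i \in t) dangle u t i j.
Proof.
rewrite /jacK derive1E.
exact: (@derive_val _ _ _ _ _ _ _ (is_derive_Kslice u i j)).
Qed.

Lemma dangle_out u t i j : t \in T -> i \in t -> j \notin t ->
  dangle u t i j = 0.
Proof.
move=> tT it jt; have [p [q tri_ipq]] := is_triP tT it.
have /and5P[_ _ _ _ /eqP t_ipq] := tri_ipq.
move: jt; rewrite (dangleE u j tri_ipq) t_ipq !inE !negb_or eq_sym.
case/andP=> /andP[/negbTE-> pj] qj.
rewrite eq_sym (negbTE pj) eq_sym (negbTE qj).
by rewrite subrr !mulr0 addr0.
Qed.

Lemma dangleC u t i j : t \in T -> i \in t -> j \in t ->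
  dangle u t i j = dangle u t j i.
Proof.
move=> tT it jt; have [->//|ij] := eqVneq i j.
have [k tri_ijk] := is_tri2P tT it jt ij; have tri_jik := is_triC12 tri_ijk.
have /and5P[_ _ ik jk _] := tri_ijk.
rewrite (dangleE u j tri_ijk) (dangleE u i tri_jik) !eqxx.
rewrite (eq_sym j i) (eq_sym k i) (eq_sym k j).
rewrite (negbTE ij) (negbTE ik) (negbTE jk).
by rewrite (weightC u i j k); ring.
Qed.

Lemma jacK_sym u i j : jacK T Theta u i j = jacK T Theta u j i.
Proof.
rewrite !jacKE; congr (- _).
rewrite big_mkcondr [RHS]big_mkcondr; apply: eq_bigr => t tT.
case it: (i \in t); case jt: (j \in t) => //.
- exact: dangleC.
- by rewrite dangle_out ?jt.
- by rewrite dangle_out ?it.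
Qed.

Definition tri_quad u x t :=
  - \sum_(i in t) \sum_(j in t) x i * dangle u t i j * x j.

Lemma quadK_split u x : quadK T Theta u x = \sum_(t in T) tri_quad u x t.
Proof.
have jac_term i j : x i * jacK T Theta u i j * x j = - \sum_(t in T)
    (if (i \in t) && (j \in t) then x i * dangle u t i j * x j else 0).
  rewrite jacKE mulrN mulNr big_distrr big_distrl /= big_mkcondr; congr (- _).
  apply: eq_bigr => t tT; case it: (i \in t); case jt: (j \in t) => //=.
  by rewrite dangle_out ?mulr0 ?mul0r ?it ?jt.
rewrite /quadK /tri_quad sumrN.
under eq_bigr => i _ do under eq_bigr => j _ do rewrite jac_term.
under eq_bigr => i _ do rewrite sumrN exchange_big.
rewrite sumrN exchange_big; congr (- _); apply: eq_bigr => t _.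
rewrite [RHS]big_mkcond; apply: eq_bigr => i _.
case: (i \in t) => /=; first by rewrite [RHS]big_mkcond.
by rewrite big1.
Qed.

Lemma tri_quadE u x t a b c : is_tri t a b c ->
  tri_quad u x t = weight u a b c * (x a - x b) ^+ 2
    + weight u a c b * (x a - x c) ^+ 2 + weight u b c a * (x b - x c) ^+ 2.
Proof.
move=> tri_abc; have tri_bac := is_triC12 tri_abc.
have tri_cab := is_triC12 (is_triC23 tri_abc).
have /and5P[_ ab ac bc _] := tri_abc.
rewrite /tri_quad !(sum_tri _ tri_abc).
rewrite !(dangleE u _ tri_abc) !(dangleE u _ tri_bac) !(dangleE u _ tri_cab).
rewrite !eqxx ?(eq_sym b a) ?(eq_sym c a) ?(eq_sym c b).
rewrite (negbTE ab) (negbTE ac) (negbTE bc).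
by rewrite (weightC u a b c) (weightC u a c b) (weightC u b c a) /=; ring.
Qed.

Lemma tri_quad_ge0 u x t : t \in T -> 0 <= tri_quad u x t.
Proof.
move=> /is_tri_exists[a [b [c tri_abc]]]; rewrite (tri_quadE u x tri_abc).
have tri_acb := is_triC23 tri_abc.
have tri_bca := is_triC23 (is_triC12 tri_abc).
have := weight_ge0 u tri_abc; have := weight_ge0 u tri_acb.
have := weight_ge0 u tri_bca.
by move=> *; rewrite !addr_ge0 // mulr_ge0 ?sqr_ge0.
Qed.

Lemma tri_quad_eq0 u x t : t \in T -> tri_quad u x t = 0 ->
  {in t &, forall v w, x v = x w}.
Proof.
move=> /is_tri_exists[a [b [c tri_abc]]]; rewrite (tri_quadE u x tri_abc).
have tri_acb := is_triC23 tri_abc; have tri_bac := is_triC12 tri_abc.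
have tri_bca := is_triC23 tri_bac; have tri_cab := is_triC12 tri_acb.
have pair_a := weight_pair_gt0 u tri_abc.
have := weight_pair_gt0 u tri_bac; rewrite (weightC u a b c) => pair_b.
have := weight_pair_gt0 u tri_cab.
rewrite (weightC u a c b) (weightC u b c a) => pair_c.
move=> /(weighted_sq_sum3_eq0 (weight_ge0 u tri_abc) (weight_ge0 u tri_acb)
  (weight_ge0 u tri_bca) pair_a pair_b pair_c) [xab xac].
have /and5P[_ _ _ _ /eqP->] := tri_abc.
have x_t v : v \in [set a; b; c] -> x v = x a.
  by rewrite !inE => /orP[/orP[]|] /eqP->.
by move=> v w /x_t-> /x_t->.
Qed.

Lemma quadK_ge0 u x : 0 <= quadK T Theta u x.
Proof. by rewrite quadK_split; apply: sumr_ge0 => t /tri_quad_ge0. Qed.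

Lemma quadK_eq0_const u x : quadK T Theta u x = 0 -> forall a b, x a = x b.
Proof.
rewrite quadK_split => /psumr_eq0P quad0.
have tri_quad0 t : t \in T -> tri_quad u x t = 0.
  by apply: quad0 => t' /tri_quad_ge0.
have x_adj a b : adj T a b -> x a = x b.
  case/andP=> _ /andP[_ /existsP[t /andP[tT ab_t]]].
  apply: (tri_quad_eq0 tT (tri_quad0 t tT)); apply: (fintype.subsetP ab_t);
    by rewrite !inE eqxx ?orbT.
by case: surfT => _ _ _ _ connected a b; apply: connect_fun_eq x_adj _ _ _.
Qed.

End CurvatureJacobian.

Theorem lemma3p1 (R : realType) (nV : nat) (T : {set {set 'I_nV}})
    (Theta : {set 'I_nV} -> R) :
  is_surface_triangulation T ->
  (forall e, is_edge T e -> 0 <= Theta e < pi) ->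
  C1 T Theta ->
  forall u : 'I_nV -> R,
  [/\ forall i j : 'I_nV, derivable (Kslice T Theta u i j) (u j) 1,
      forall i j : 'I_nV, jacK T Theta u i j = jacK T Theta u j i,
      forall x : 'I_nV -> R, 0 <= quadK T Theta u x
    & forall x : 'I_nV -> R, \sum_(i < nV) x i = 0 -> (exists i, x i != 0) ->
        0 < quadK T Theta u x].
Proof.
move=> surfT Theta_range C1T u.
have quad_ge0 x := quadK_ge0 Theta_range C1T surfT u x.
split=> [i j | i j | x | x sum_x0 [i xi_neq0]].
- have Kslice_d := is_derive_Kslice Theta_range C1T surfT u i j.
  exact: (@ex_derive _ _ _ _ _ _ _ Kslice_d).
- exact: jacK_sym.
- exact: quad_ge0.
- rewrite lt_def quad_ge0 andbT; apply: contra_neq xi_neq0 => quad_x0.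
  have x_const := quadK_eq0_const Theta_range C1T surfT quad_x0.
  move: sum_x0; under eq_bigr => k _ do rewrite (x_const k i).
  rewrite sumr_const card_ord => /eqP; rewrite mulrn_eq0.
  case/orP=> [/eqP nV0|/eqP //].
  have nV_gt0 : (0 < nV)%N := leq_ltn_trans (leq0n i) (ltn_ord i).
  by rewrite nV0 in nV_gt0.
Qed.
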